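(* Let $n\in\mathbb N$ and let $S$ be a well ordered subsemigroup of the nonnegative part $\{x\in\mathbb R^n\mid x\ge0\}$ of $\mathbb R^n$ with the lexicographic order. Suppose that $S$ has ordinal type $\le\omega^h$ for some $h\in\mathbb N$. Then $S$ has no accumulation point in $\mathbb R^n$ for the Euclidean topology.
   Context: $\omega$ denotes the ordinal type of $\mathbb N$. The lexicographic order on $\mathbb R^n$ compares first coordinates first. *)

From Stdlib Require Import Reals.
Open Scope R_scope.

(* Points of R^n are represented as functions nat -> R vanishing from index n on. *)
Definition in_Rn (n : nat) (x : nat -> R) : Prop :=
  forall i : nat, (n <= i)%nat -> x i = 0.

Definition vadd (x y : nat -> R) : nat -> R := fun i => x i + y i.
Definition vzero : nat -> R := fun _ => 0.

Definition eq_n (n : nat) (x y : nat -> R) : Prop :=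
  forall i : nat, (i < n)%nat -> x i = y i.

Definition lex_lt (n : nat) (x y : nat -> R) : Prop :=
  exists k : nat, (k < n)%nat /\ (forall i : nat, (i < k)%nat -> x i = y i) /\ x k < y k.

Definition lex_le (n : nat) (x y : nat -> R) : Prop := eq_n n x y \/ lex_lt n x y.

(* Strict lexicographic order on N^h, which has order type omega^h. *)
Definition nlex_lt (h : nat) (u v : nat -> nat) : Prop :=
  exists k : nat, (k < h)%nat /\ (forall i : nat, (i < k)%nat -> u i = v i) /\ (u k < v k)%nat.

Fixpoint sqsum (n : nat) (x : nat -> R) : R :=
  match n with
  | O => 0
  | S m => sqsum m x + x m * x m
  end.

Definition dist_n (n : nat) (x y : nat -> R) : R :=
  sqrt (sqsum n (fun i => x i - y i)).

Definition nonneg_subsemigroup (n : nat) (S : (nat -> R) -> Prop) : Prop :=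
  (forall x, S x -> in_Rn n x) /\
  (forall x, S x -> lex_le n vzero x) /\
  (forall x y, S x -> S y -> S (vadd x y)).

Definition lex_well_ordered (n : nat) (S : (nat -> R) -> Prop) : Prop :=
  forall T : (nat -> R) -> Prop,
    (forall x, T x -> S x) -> (exists x, T x) ->
    exists m, T m /\ forall y, T y -> lex_le n m y.

(* Ordinal type of (S, lex) is <= omega^h: S is order-isomorphic to an
   initial segment of N^h with the lexicographic order (order type omega^h). *)
Definition ordtype_le_omega_pow (n : nat) (S : (nat -> R) -> Prop) (h : nat) : Prop :=
  exists f : (nat -> R) -> (nat -> nat),
    (forall x y, S x -> S y -> lex_lt n x y -> nlex_lt h (f x) (f y)) /\
    (forall x (v : nat -> nat), S x -> nlex_lt h v (f x) ->
        exists y, S y /\ forall i, (i < h)%nat -> f y i = v i).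

Definition accumulation_point (n : nat) (S : (nat -> R) -> Prop) (p : nat -> R) : Prop :=
  in_Rn n p /\
  forall eps : R, 0 < eps ->
    exists x, S x /\ ~ eq_n n x p /\ dist_n n x p < eps.

From Stdlib Require Import Reals Lra Lia Psatz Arith Classical ClassicalEpsilon.
Open Scope R_scope.

(* Suppose p is an accumulation point of S.  Points of S
   approaching p give an infinite sequence of pairwise distinct elements of S
   whose coordinates are bounded above; since S is well ordered it contains a
   strictly lex-increasing subsequence.  Passing to further subsequences we
   freeze the first c coordinates and make coordinate c strictly increasing and
   bounded, hence convergent to some limit l.  Sums of h+1 such elements, with
   indices chosen so that every increment at coordinate c dominates h+1 times
   the remaining distance to l, realise a strictly increasing map from
   (N^(h+1), lex) into (S, lex); because S is closed under addition these sums
   lie in S.  Composing with the embedding of S into (N^h, lex) given by the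
   hypothesis on its ordinal type yields a strictly increasing map
   N^(h+1) -> N^h, which cannot exist (omega^(h+1) does not embed in omega^h). *)

Lemma dependent_subsequence (P : nat -> nat -> Prop) :
  (forall i, exists j, (i < j)%nat /\ P i j) ->
  exists sg : nat -> nat, forall s, (sg s < sg (S s))%nat /\ P (sg s) (sg (S s)).
Proof.
  intros H. destruct (choice _ H) as [g Hg].
  exists (fix sg s := match s with O => O | S s' => g (sg s') end).
  intro s. apply Hg.
Qed.

Lemma sqsum_nonneg n d : 0 <= sqsum n d.
Proof. induction n; simpl; nra. Qed.

Lemma sqsum_ge_term n d i : (i < n)%nat -> d i * d i <= sqsum n d.
Proof.
  induction n as [|n IH]; intros Hi; [lia|]. simpl.
  pose proof (sqsum_nonneg n d).
  destruct (Nat.eq_dec i n) as [->|Hne]; [nra|].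
  specialize (IH ltac:(lia)). nra.
Qed.

Lemma sqsum_eq0 n d : sqsum n d = 0 -> forall i, (i < n)%nat -> d i = 0.
Proof.
  intros H i Hi. pose proof (sqsum_ge_term n d i Hi). nra.
Qed.

Lemma sqsum_ext n d e : (forall i, (i < n)%nat -> d i = e i) -> sqsum n d = sqsum n e.
Proof.
  induction n as [|n IH]; intros H; simpl; auto.
  rewrite IH by (intros; apply H; lia). rewrite H by lia. reflexivity.
Qed.

Lemma dist_n_pos n x p : ~ eq_n n x p -> 0 < dist_n n x p.
Proof.
  intros Hxp. unfold dist_n. apply sqrt_lt_R0.
  destruct (sqsum_nonneg n (fun i => x i - p i)) as [Hlt|Heq]; auto.
  exfalso. apply Hxp. intros i Hi.
  pose proof (sqsum_eq0 _ _ (eq_sym Heq) i Hi). simpl in *. lra.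
Qed.

Lemma coord_le_dist_n n x p i : (i < n)%nat -> x i - p i <= dist_n n x p.
Proof.
  intros Hi. unfold dist_n.
  apply Rle_trans with (Rabs (x i - p i)); [apply Rle_abs|].
  rewrite <- sqrt_Rsqr_abs. apply sqrt_le_1_alt. unfold Rsqr.
  exact (sqsum_ge_term n (fun i => x i - p i) i Hi).
Qed.

Lemma dist_n_eq_n n x y p : eq_n n x y -> dist_n n x p = dist_n n y p.
Proof.
  intros H. unfold dist_n. f_equal. apply sqsum_ext. intros i Hi. rewrite H; auto.
Qed.

Lemma bounded_nat_max (X : Type) (x0 : X) (g : X -> nat) (c : nat) :
  (forall y, (g y <= c)%nat) -> exists x, forall y, (g y <= g x)%nat.
Proof.
  revert g. induction c as [|c IH]; intros g H.
  - exists x0. intros y. specialize (H y). lia.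
  - destruct (classic (exists x, g x = S c)) as [[x Hx]|Hnone].
    + exists x. intros y. rewrite Hx. apply H.
    + apply IH. intros y. specialize (H y).
      assert (g y <> S c) by (intro E; apply Hnone; eauto). lia.
Qed.

(* For the
   inductive step, the first output coordinate on the block 0 x N^(m+1) is
   bounded, so it is maximal, hence constant, above some b0; the remaining
   output coordinates then embed N^(m+1) into N^m. *)
Lemma no_nlex_embedding m : ~ exists F : (nat -> nat) -> (nat -> nat),
  forall u v, nlex_lt (S m) u v -> nlex_lt m (F u) (F v).
Proof.
  induction m as [|m IH]; intros [F HF].
  { destruct (HF (fun _ => 0%nat) (fun _ => 1%nat)) as [k [Hk _]]; [|lia].
    exists 0%nat. repeat split; intros; lia. }
  apply IH.
  set (e1 := fun i : nat => match i with O => 1%nat | _ => 0%nat end).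
  set (cons0 := fun (b : nat -> nat) (i : nat) => match i with O => 0%nat | S i' => b i' end).
  set (g := fun b => F (cons0 b) 0%nat).
  assert (g_bounded : forall b, (g b <= F e1 0)%nat).
  { intros b. destruct (HF (cons0 b) e1) as [k [Hk [Hpre Hlt]]].
    - exists 0%nat. repeat split; intros; simpl; lia.
    - unfold g. destruct k; [lia|]. rewrite Hpre by lia. lia. }
  assert (g_mono : forall b b', nlex_lt (S m) b b' -> (g b <= g b')%nat).
  { intros b b' [k [Hk [Hpre Hlt]]].
    destruct (HF (cons0 b) (cons0 b')) as [k' [Hk' [Hpre' Hlt']]].
    - exists (S k). repeat split; [lia| |assumption].
      intros [|i] Hi; simpl; auto. apply Hpre; lia.
    - unfold g. destruct k'; [lia|]. rewrite Hpre' by lia. lia. }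
  destruct (bounded_nat_max _ (fun _ => 0%nat) g _ g_bounded) as [b0 Hb0].
  set (above := fun (b : nat -> nat) (i : nat) =>
                  (b0 i + b i + match i with O => 1 | _ => 0 end)%nat).
  assert (g_const : forall b, g (above b) = g b0).
  { intros b. apply Nat.le_antisymm; auto. apply g_mono.
    exists 0%nat. repeat split; intros; unfold above; lia. }
  exists (fun b i => F (cons0 (above b)) (S i)).
  intros b b' [k [Hk [Hpre Hlt]]].
  destruct (HF (cons0 (above b)) (cons0 (above b'))) as [k' [Hk' [Hpre' Hlt']]].
  - exists (S k). repeat split; [lia| |simpl; unfold above; lia].
    intros [|i] Hi; simpl; auto. unfold above. rewrite Hpre by lia. reflexivity.
  - destruct k' as [|k'].
    + exfalso. pose proof (g_const b). pose proof (g_const b'). unfold g in *. lia.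
    + exists k'. repeat split; [lia| |assumption]. intros i Hi. apply Hpre'. lia.
Qed.

(* Near an accumulation point there are infinitely many pairwise distinct points
   of S, which moreover have bounded coordinates: we take points whose
   distances to p strictly decrease and stay below 1. *)
Lemma accumulation_distinct_sequence n A p : accumulation_point n A p ->
  exists z : nat -> nat -> R,
    (forall k, A (z k) /\ forall i, (i < n)%nat -> z k i <= p i + 1) /\
    (forall a b, (a < b)%nat -> ~ eq_n n (z a) (z b)).
Proof.
  intros [_ Hacc].
  assert (Hpick : forall eps, exists x, 0 < eps -> A x /\ ~ eq_n n x p /\ dist_n n x p < eps).
  { intros eps. destruct (Rlt_dec 0 eps) as [Heps|Heps].
    - destruct (Hacc eps Heps) as [x Hx]. exists x; auto.
    - exists p. intro; lra. }
  destruct (choice _ Hpick) as [G HG].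
  pose (z := fix z k := match k with O => G 1 | S k' => G (dist_n n (z k') p) end).
  assert (Hz : forall k, A (z k) /\ ~ eq_n n (z k) p /\ dist_n n (z k) p < 1).
  { induction k as [|k [Hs [Hne Hd]]]; [apply HG; lra|].
    destruct (HG _ (dist_n_pos _ _ _ Hne)) as [? [? ?]]. simpl. repeat split; auto; lra. }
  assert (dist_decr : forall a b, (a < b)%nat -> dist_n n (z b) p < dist_n n (z a) p).
  { assert (Hstep : forall k, dist_n n (z (S k)) p < dist_n n (z k) p).
    { intros k. apply HG, dist_n_pos, Hz. }
    intros a b Hab. induction Hab; [apply Hstep|]. specialize (Hstep m). lra. }
  exists z. split.
  - intros k. split; [apply Hz|]. intros i Hi.
    pose proof (coord_le_dist_n n (z k) p i Hi). pose proof (proj2 (proj2 (Hz k))). lra.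
  - intros a b Hab Heq. pose proof (dist_n_eq_n n _ _ p Heq). pose proof (dist_decr a b Hab). lra.
Qed.

(* In a well-ordered set, a sequence of pairwise distinct elements has a
   strictly increasing subsequence: repeatedly take the least element of a tail. *)
Lemma well_ordered_increasing_subsequence n A (z : nat -> nat -> R) :
  lex_well_ordered n A -> (forall k, A (z k)) ->
  (forall a b, (a < b)%nat -> ~ eq_n n (z a) (z b)) ->
  exists sg : nat -> nat, forall s, lex_lt n (z (sg s)) (z (sg (S s))).
Proof.
  intros Hwo HS Hdist.
  assert (tail_min : forall i, exists j, (i < j)%nat /\
            forall j', (i < j')%nat -> lex_le n (z j) (z j')).
  { intros i. destruct (Hwo (fun x => exists j, (i < j)%nat /\ x = z j))
      as [x [[j [Hij ->]] Hmin]].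
    - intros x [j [_ ->]]. apply HS.
    - exists (z (S i)), (S i). auto.
    - exists j. split; auto. intros j' Hj'. apply Hmin. eauto. }
  destruct (dependent_subsequence _ tail_min) as [sg Hsg].
  exists (fun s => sg (S s)). intros s.
  destruct (Hsg s) as [Hlt0 Hmin]. destruct (Hsg (S s)) as [Hlt _].
  destruct (Hmin (sg (S (S s))) ltac:(lia)) as [Heq|]; auto.
  exfalso. exact (Hdist _ _ Hlt Heq).
Qed.

(* A lex-increasing sequence whose first k coordinates are constant has a
   subsequence whose first c coordinates are constant and whose c-th coordinate
   increases strictly: either coordinate k increases infinitely often, or it is
   eventually constant and we move on to coordinate k+1.  The predicate P, which
   holds along the sequence, is inherited by the subsequence. *)
Lemma lex_increasing_freezes n (P : (nat -> R) -> Prop) : forall d k, (k + d = n)%nat ->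
  forall y : nat -> nat -> R, (forall s, P (y s)) -> (forall s, lex_lt n (y s) (y (S s))) ->
  (forall s i, (i < k)%nat -> y s i = y O i) ->
  exists c (w : nat -> nat -> R), (c < n)%nat /\ (forall s, P (w s)) /\
    (forall s i, (i < c)%nat -> w s i = w O i) /\ (forall s, w s c < w (S s) c).
Proof.
  induction d as [|d IH]; intros k Hkd y HP Hlt Hfrozen.
  { exfalso. destruct (Hlt O) as [k0 [Hk0 [_ H]]].
    rewrite (Hfrozen 1%nat k0) in H by lia. lra. }
  assert (coord_mono : forall s t, (s <= t)%nat -> y s k <= y t k).
  { assert (Hstep : forall s, y s k <= y (S s) k).
    { intros s. destruct (Hlt s) as [k0 [Hk0 [Heq H]]].
      destruct (lt_eq_lt_dec k0 k) as [[L|E]|G].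
      - rewrite (Hfrozen s k0), (Hfrozen (S s) k0) in H by lia. lra.
      - subst; lra.
      - rewrite Heq by lia. lra. }
    intros s t Hst. induction Hst; [lra|]. specialize (Hstep m). lra. }
  destruct (classic (forall t, exists t', (t < t')%nat /\ y t k < y t' k)) as [Hinc|Hstable].
  - destruct (dependent_subsequence _ Hinc) as [sg Hsg].
    exists k, (fun s => y (sg s)). repeat split; [lia|auto| |apply Hsg].
    intros s i Hi. rewrite (Hfrozen (sg s) i Hi), (Hfrozen (sg O) i Hi). auto.
  - apply not_all_ex_not in Hstable. destruct Hstable as [t Ht].
    assert (Hconst : forall t', (t < t')%nat -> y t' k = y t k).
    { intros t' Htt. assert (~ y t k < y t' k) by (intro; apply Ht; eauto).
      pose proof (coord_mono t t' ltac:(lia)). lra. }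
    apply (IH (S k) ltac:(lia) (fun s => y (s + S t)%nat)); auto.
    intros s i Hi. simpl. destruct (Nat.eq_dec i k) as [->|Hne].
    + rewrite (Hconst (s + S t)%nat), (Hconst (S t)) by lia. auto.
    + rewrite (Hfrozen _ i), (Hfrozen (S t) i) by lia. auto.
Qed.

Lemma sum_f_R0_prefix (a b : nat -> R) k : (forall j, (j < k)%nat -> a j = b j) ->
  forall m, (m < k)%nat -> sum_f_R0 a m = sum_f_R0 b m.
Proof.
  intros H m. induction m as [|m IH]; intros Hm; simpl; [apply H; lia|].
  rewrite IH by lia. rewrite H by lia. reflexivity.
Qed.

Lemma sum_f_R0_first_difference (a b : nat -> R) (k d : nat) (L D : R) :
  (forall j, (j < k)%nat -> a j = b j) -> (forall j, (k < j)%nat -> a j <= L) ->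
  (forall j, (k < j)%nat -> D <= b j) ->
  sum_f_R0 a (k + d) - sum_f_R0 b (k + d) <= a k - b k + INR d * (L - D).
Proof.
  intros Hpre HL HD. induction d as [|d IH].
  - rewrite Nat.add_0_r. simpl INR. destruct k as [|k]; simpl; [lra|].
    rewrite (sum_f_R0_prefix a b (S k) Hpre k) by lia. lra.
  - rewrite Nat.add_succ_r. simpl sum_f_R0. rewrite S_INR.
    pose proof (HL (S (k + d)) ltac:(lia)). pose proof (HD (S (k + d)) ltac:(lia)). lra.
Qed.

Lemma increment_dominates_tail (r : nat -> R) (l M : R) :
  (forall i, r i < r (S i)) -> Un_cv r l -> 0 < M ->
  exists G : nat -> nat, forall i j, (G i <= j)%nat -> M * (l - r j) < r (S i) - r i.
Proof.
  intros Hincr Hcv HM.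
  apply (choice (fun i K => forall j, (K <= j)%nat -> M * (l - r j) < r (S i) - r i)).
  intros i.
  assert (Hgap : 0 < (r (S i) - r i) / M)
    by (apply Rdiv_lt_0_compat; [pose proof (Hincr i)|]; lra).
  destruct (Hcv _ Hgap) as [K HK]. exists K. intros j Hj.
  specialize (HK j Hj). unfold Rdist in HK. rewrite Rabs_minus_sym in HK.
  pose proof (Rle_abs (l - r j)).
  apply Rlt_le_trans with (M * ((r (S i) - r i) / M)).
  - apply Rmult_lt_compat_l; lra.
  - right. field. lra.
Qed.

Fixpoint majorant (G : nat -> nat) (i : nat) : nat :=
  match i with O => G O | S i' => (majorant G i' + G (S i') + S i')%nat end.

Lemma majorant_ge G i : (G i <= majorant G i)%nat /\ (i <= majorant G i)%nat.
Proof. destruct i; simpl; lia. Qed.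

Lemma majorant_mono G a b : (a <= b)%nat -> (majorant G a <= majorant G b)%nat.
Proof. induction 1; simpl; lia. Qed.

(* The index map u |-> (spread H u j)_j sends u in N^(h+1) to an increasing
   sequence of indices, where each index is beyond H of the previous one. *)
Fixpoint spread (H : nat -> nat) (u : nat -> nat) (j : nat) : nat :=
  match j with O => u O | S j' => (H (spread H u j') + u (S j'))%nat end.

Lemma spread_prefix H u u' k : (forall i, (i < k)%nat -> u i = u' i) ->
  forall j, (j < k)%nat -> spread H u j = spread H u' j.
Proof.
  intros Hpre j. induction j as [|j IH]; intros Hj; simpl; [apply Hpre; lia|].
  rewrite IH by lia. rewrite Hpre by lia. reflexivity.
Qed.

Lemma spread_first_difference H u u' k : (forall i, (i < k)%nat -> u i = u' i) ->
  (u k < u' k)%nat -> (spread H u k < spread H u' k)%nat.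
Proof.
  intros Hpre Hk. destruct k as [|k]; simpl; auto.
  rewrite (spread_prefix H u u' (S k) Hpre k) by lia. lia.
Qed.

Lemma spread_beyond H u k : (forall x, (x <= H x)%nat) ->
  forall j, (k < j)%nat -> (H (spread H u k) <= spread H u j)%nat.
Proof.
  intros Hid j. induction j as [|j IH]; intros Hj; [lia|]. simpl.
  destruct (Nat.eq_dec k j) as [->|Hne]; [lia|].
  specialize (IH ltac:(lia)). specialize (Hid (spread H u j)). lia.
Qed.

(* Along spread indices for the majorant of the thresholds G, the sum of h+1
   terms of r is strictly lex-monotone in u: at the first index k where u and
   u' differ, the increment gained by u' beats all h - k later terms of u. *)
Lemma spread_sum_increasing (r : nat -> R) (l : R) (h : nat) (G : nat -> nat) :
  (forall i, r i < r (S i)) -> (forall i, r i < l) ->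
  (forall i j, (G i <= j)%nat -> (INR h + 1) * (l - r j) < r (S i) - r i) ->
  forall u u', nlex_lt (S h) u u' ->
  sum_f_R0 (fun j => r (spread (majorant G) u j)) h <
  sum_f_R0 (fun j => r (spread (majorant G) u' j)) h.
Proof.
  intros Hincr Hl Hgap u u' [k [Hk [Hpre Hlt]]].
  assert (r_mono : forall a b, (a <= b)%nat -> r a <= r b).
  { intros a b Hab. induction Hab; [lra|]. pose proof (Hincr m). lra. }
  set (i0 := spread (majorant G) u k).
  assert (Hi0 : (i0 < spread (majorant G) u' k)%nat)
    by (apply spread_first_difference; auto).
  assert (later_terms : forall j, (k < j)%nat -> r (G i0) <= r (spread (majorant G) u' j)).
  { intros j Hj. apply r_mono.
    pose proof (spread_beyond (majorant G) u' k (fun x => proj2 (majorant_ge G x)) j Hj).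
    pose proof (majorant_mono G _ _ (Nat.lt_le_incl _ _ Hi0)).
    pose proof (proj1 (majorant_ge G i0)). lia. }
  pose proof (sum_f_R0_first_difference (fun j => r (spread (majorant G) u j))
                (fun j => r (spread (majorant G) u' j)) k (h - k) l (r (G i0))) as Hdiff.
  replace (k + (h - k))%nat with h in Hdiff by lia. simpl in Hdiff. fold i0 in Hdiff.
  specialize (Hdiff ltac:(intros j Hj; rewrite (spread_prefix _ u u' k Hpre j Hj); reflexivity)
                     ltac:(intros j _; left; apply Hl) later_terms).
  pose proof (Hgap i0 (G i0) (le_n _)).
  pose proof (r_mono _ _ Hi0). pose proof (Hl (G i0)).
  assert (INR (h - k) <= INR h + 1) by (pose proof (le_INR (h - k) h ltac:(lia)); lra).
  assert (INR (h - k) * (l - r (G i0)) <= (INR h + 1) * (l - r (G i0)))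
    by (apply Rmult_le_compat_r; lra).
  lra.
Qed.

Fixpoint vsum (m : nat) (g : nat -> nat -> R) : nat -> R :=
  match m with O => g O | S m' => vadd (vsum m' g) (g (S m')) end.

Lemma vsum_coord m g i : vsum m g i = sum_f_R0 (fun j => g j i) m.
Proof. induction m as [|m IH]; simpl; auto. unfold vadd. rewrite IH. reflexivity. Qed.

Lemma vsum_closed (A : (nat -> R) -> Prop) m g :
  (forall x y, A x -> A y -> A (vadd x y)) -> (forall j, A (g j)) -> A (vsum m g).
Proof. intros Hadd Hg. induction m; simpl; auto. Qed.

Lemma nlex_embedding_of_frozen_sequence n (A : (nat -> R) -> Prop) h c (w : nat -> nat -> R) :
  (forall x y, A x -> A y -> A (vadd x y)) -> (c < n)%nat -> (forall s, A (w s)) ->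
  (forall s i, (i < c)%nat -> w s i = w O i) -> (forall s, w s c < w (S s) c) ->
  (exists B, forall s, w s c <= B) ->
  exists phi : (nat -> nat) -> (nat -> R), (forall u, A (phi u)) /\
    forall u u', nlex_lt (S h) u u' -> lex_lt n (phi u) (phi u').
Proof.
  intros Hadd Hc HA Hfrozen Hincr [B HB].
  set (r := fun s => w s c).
  destruct (growing_cv r (fun s => Rlt_le _ _ (Hincr s))) as [l Hcv].
  { exists B. intros x [i ->]. apply HB. }
  assert (Hl : forall i, r i < l).
  { intros i. pose proof (growing_ineq r l (fun s => Rlt_le _ _ (Hincr s)) Hcv (S i)).
    pose proof (Hincr i). unfold r in *. lra. }
  destruct (increment_dominates_tail r l (INR h + 1) Hincr Hcv) as [G HG].
  { pose proof (pos_INR h). lra. }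
  exists (fun u => vsum h (fun j => w (spread (majorant G) u j))). split.
  - intros u. apply vsum_closed; auto.
  - intros u u' Huu'. exists c. split; [assumption|]. split.
    + intros i Hi. rewrite !vsum_coord. apply sum_eq. intros j _.
      rewrite (Hfrozen _ i Hi), (Hfrozen (spread (majorant G) u' j) i Hi). reflexivity.
    + rewrite !vsum_coord. exact (spread_sum_increasing r l h G Hincr Hl HG u u' Huu').
Qed.

Theorem mainTheorem5 (n : nat) (S : (nat -> R) -> Prop) (h : nat) :
  nonneg_subsemigroup n S ->
  lex_well_ordered n S ->
  ordtype_le_omega_pow n S h ->
  ~ (exists p : nat -> R, accumulation_point n S p).
Proof.
  intros [_ [_ Hadd]] Hwo [f [Hf _]] [p Hp].
  destruct (accumulation_distinct_sequence n S p Hp) as [z [Hz Hdistinct]].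
  destruct (well_ordered_increasing_subsequence n S z Hwo (fun k => proj1 (Hz k)) Hdistinct)
    as [sg Hsg].
  destruct (lex_increasing_freezes n (fun x => S x /\ forall i, (i < n)%nat -> x i <= p i + 1)
              n O eq_refl (fun s => z (sg s)) (fun s => Hz (sg s)) Hsg
              ltac:(intros; lia)) as [c [w [Hc [Hw [Hfrozen Hincr]]]]].
  destruct (nlex_embedding_of_frozen_sequence n S h c w Hadd Hc (fun s => proj1 (Hw s))
              Hfrozen Hincr) as [phi [HphiS Hphi]].
  { exists (p c + 1). intros s. apply (proj2 (Hw s)), Hc. }
  apply (no_nlex_embedding h). exists (fun u => f (phi u)).
  intros u v Huv. apply Hf; auto.
Qed.
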